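(* Let $k>0$ and let $f:\mathbb{R}^d\to\mathbb{R}$ be a scalar-valued neural network in $\mathcal{A}_k^{\infty}$, i.e. $f = l_{W_n,b_n}\circ \mathrm{ReLU}\circ l_{W_{n-1},b_{n-1}}\circ \cdots \circ \mathrm{ReLU}\circ l_{W_1,b_1}$ with $n\ge 2$ and $\prod_{i=1}^n \|W_i\|_\infty \le k$. Let $W_0\in\mathbb{R}^{d\times 1}$ and $b_0\in\mathbb{R}^d$ with $\|W_0\|_\infty = 1$, and define $h_{W_0,b_0}:\mathbb{R}\to\mathbb{R}$ by $h_{W_0,b_0} = f\circ l_{W_0,b_0}$. Then for any such choice of $W_0$ and $b_0$, $$I(h_{W_0,b_0}') \le 2k.$$
   Context: For a matrix $W$ and vector $b$, $l_{W,b}(x)=Wx+b$. $\mathrm{ReLU}$ is applied elementwise, $\mathrm{ReLU}(x)=\max(x,0)$. For a matrix $W$, $\|W\|_\infty=\sup_{x\ne 0}\|Wx\|_\infty/\|x\|_\infty$, which equals the maximum over rows of $W$ of the $\ell_1$ norm of the row. Derivatives are taken where they exist (the functions involved are piecewise linear), and $g(\pm\infty)$ denotes $\lim_{t\to\pm\infty} g(t)$. For $g:\mathbb{R}\to\mathbb{R}$, the total variation over $\mathbb{R}$ is $V_{-\infty}^{\infty}(g)=\sup_T\sum_{t_i\in T}|g(t_i)-g(t_{i-1})|$ over all finite partitions $T$, and the intrinsic variability of $g$ is $I(g)=V_{-\infty}^{\infty}(g)+|g(\infty)|+|g(-\infty)|$. *)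

From HB Require Import structures.
From mathcomp Require Import all_boot all_order all_algebra.
From mathcomp Require Import all_classical all_reals all_analysis.
Set Implicit Arguments. Unset Strict Implicit. Unset Printing Implicit Defensive.
Import Order.TTheory GRing.Theory Num.Theory.
Import numFieldNormedType.Exports.
Local Open Scope ring_scope.

Definition mx_norm_inf (R : realType) m n (A : 'M[R]_(m, n)) : R :=
  \big[Num.max/0]_(i < m) \sum_(j < n) `|A i j|.

Definition relu (R : realType) m n (A : 'M[R]_(m, n)) : 'M[R]_(m, n) :=
  map_mx (fun x => Num.max x 0) A.

(* Network with layer widths w 0 (= input dim), w 1, ..., w n.
   Layer i+1 (i < n) has weight W i : 'M_(w i.+1, w i) and bias b i.
   net_pre W b k x = output of the k-th affine layer (before ReLU),
   with net_pre 0 x = x; ReLU is applied between consecutive affine layers. *)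
Fixpoint net_pre (R : realType) (w : nat -> nat)
  (W : forall i : nat, 'M[R]_(w i.+1, w i)) (b : forall i : nat, 'cV[R]_(w i.+1))
  (k : nat) (x : 'cV[R]_(w 0%N)) : 'cV[R]_(w k) :=
  match k with
  | 0%N => x
  | k'.+1 => W k' *m ((if k' == 0%N then id else @relu R _ _) (net_pre W b k' x)) + b k'
  end.

(* scalar output: the network has w n = 1, so this sum is the unique entry *)
Definition net (R : realType) (w : nat -> nat)
  (W : forall i : nat, 'M[R]_(w i.+1, w i)) (b : forall i : nat, 'cV[R]_(w i.+1))
  (n : nat) (x : 'cV[R]_(w 0%N)) : R :=
  \sum_(i < w n) (net_pre W b n x) i 0.

Fixpoint var_sum (R : realType) (g : R -> R) (s : seq R) : R :=
  match s with
  | x :: ((y :: _) as s') => `|g y - g x| + var_sum g s'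
  | _ => 0
  end.

From HB Require Import structures.
From mathcomp Require Import all_boot all_order all_algebra.
From mathcomp Require Import all_classical all_reals all_analysis.
From mathcomp Require Import finmap ring lra.
Import Order.TTheory GRing.Theory Num.Theory.
Import numFieldNormedType.Exports.
Local Open Scope ring_scope.
Local Open Scope classical_set_scope.

(* Along the line t |-> t W0 + b0, every neuron of the network is a difference
   m_P - m_Q of two convex functions m_S t = max_{(a, c) in S} (a t + c), with all
   slopes a of P and Q in an interval of length ||W0|| prod_i ||W_i||: affine maps,
   sums and scalings preserve this, and so does ReLU, because
   max (m_P - m_Q) 0 = max m_P m_Q - m_Q.  For h = m_P - m_Q, h' is the difference
   of the right slopes of m_P and m_Q, which are nondecreasing, so the variation of
   h' is at most (A_P - a_P) + (A_Q - a_Q), where A_S and a_S are the slopes of m_S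
   at +oo and -oo.  The limits of h' are A_P - A_Q and a_P - a_Q, and the total is
   2 max A_P A_Q - 2 min a_P a_Q <= 2 k. *)

Set Implicit Arguments. Unset Strict Implicit. Unset Printing Implicit Defensive.

Section SeqMax.
Variables (R : realType) (I : eqType).
Implicit Types (g : I -> R) (s u : seq I).

Definition seqmax g s : R := if s is x :: _ then \big[Num.max/g x]_(y <- s) g y else 0.

Lemma seqmax_ge g s x : x \in s -> g x <= seqmax g s.
Proof. by case: s => // y s xs; apply: le_bigmax_seq. Qed.

Lemma seqmax_mem g s : s != [::] -> exists2 x, x \in s & seqmax g s = g x.
Proof.
case: s => // x s _ /=; have : {subset x :: s <= x :: s} by [].
elim: {1 4}(x :: s) => [|y r IH] sub; first by exists x; rewrite ?mem_head ?big_nil.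
rewrite big_cons; have [z zs ->] : exists2 z, z \in x :: s & \big[Num.max/g x]_(v <- r) g v = g z.
  by apply: IH => v vr; apply: sub; rewrite inE vr orbT.
case: (leP (g y) (g z)) => _; first by exists z.
by exists y => //; apply: sub; rewrite mem_head.
Qed.

Lemma seqmax_eq g s m : (forall x, x \in s -> g x <= m) -> (exists2 x, x \in s & g x = m) ->
  seqmax g s = m.
Proof.
move=> ub [x xs gxm]; subst m; have s0 : s != [::] by case: (s) xs.
apply/le_anti; rewrite seqmax_ge // andbT.
by have [y ys ->] := seqmax_mem g s0; apply: ub.
Qed.

Lemma seqmax_cat g s u : s != [::] -> u != [::] ->
  seqmax g (s ++ u) = Num.max (seqmax g s) (seqmax g u).
Proof.
move=> s0 u0; apply: seqmax_eq => [x|].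
  by rewrite mem_cat le_max => /orP[] /(seqmax_ge g) ->; rewrite ?orbT.
have [x xs ->] := seqmax_mem g s0; have [y yu ->] := seqmax_mem g u0.
by case: (leP (g x) (g y)) => _; [exists y | exists x]; rewrite ?mem_cat ?xs ?yu ?orbT.
Qed.

Lemma seqmax_allpairs (op : I -> I -> I) g s u :
  (forall x y, g (op x y) = g x + g y) -> s != [::] -> u != [::] ->
  seqmax g [seq op x y | x <- s, y <- u] = seqmax g s + seqmax g u.
Proof.
move=> gop s0 u0; apply: seqmax_eq => [_ /allpairsP[[x y] /= [xs yu ->]]|].
  by rewrite gop lerD // seqmax_ge.
have [x xs ->] := seqmax_mem g s0; have [y yu ->] := seqmax_mem g u0.
by exists (op x y); rewrite ?gop // allpairs_f.
Qed.

Lemma seqmax_pscale c g s : 0 <= c -> s != [::] ->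
  seqmax (fun x => c * g x) s = c * seqmax g s.
Proof.
move=> c0 s0; apply: seqmax_eq => [x xs|]; first by rewrite ler_wpM2l // seqmax_ge.
by have [x xs ->] := seqmax_mem g s0; exists x.
Qed.

End SeqMax.

Lemma seqmax_map (R : realType) (I J : eqType) (f : J -> I) (g : I -> R) (s : seq J) :
  seqmax g (map f s) = seqmax (g \o f) s.
Proof. by case: s => // x s; rewrite /seqmax /= -map_cons big_map. Qed.

Section MaxAffine.
Variable R : realType.
Implicit Types (p q : R * R) (s u : seq (R * R)) (t c M N : R) (f g : R -> R).

Definition aff p t := p.1 * t + p.2.

Definition maxaff s t := seqmax (aff^~ t) s.

Lemma maxaff_ge s p t : p \in s -> aff p t <= maxaff s t.
Proof. exact: seqmax_ge. Qed.

Lemma maxaff_eq_aff s p t : p \in s -> (forall q, q \in s -> aff q t <= aff p t) ->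
  maxaff s t = aff p t.
Proof. by move=> ps ub; apply: seqmax_eq => //; exists p. Qed.

Lemma maxaff_cat s u t : s != [::] -> u != [::] ->
  maxaff (s ++ u) t = Num.max (maxaff s t) (maxaff u t).
Proof. exact: seqmax_cat. Qed.

Lemma maxaff_allpairsD s u t : s != [::] -> u != [::] ->
  maxaff [seq p + q | p <- s, q <- u] t = maxaff s t + maxaff u t.
Proof. by apply: seqmax_allpairs => p q; rewrite /aff /=; ring. Qed.

Lemma maxaff_scale c s t : 0 <= c -> s != [::] ->
  maxaff [seq c *: p | p <- s] t = c * maxaff s t.
Proof.
move=> c0 s0; rewrite /maxaff seqmax_map -seqmax_pscale //.
by congr seqmax; apply/funext => p; rewrite /aff /= mulrDr mulrA.
Qed.

Definition dc_maxaff f M := exists s u lo hi,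
  [/\ s != [::], u != [::], f =1 (fun t => maxaff s t - maxaff u t),
      {in s ++ u, forall p, lo <= p.1 <= hi} & hi - lo <= M].

Lemma dc_maxaff_le f M N : M <= N -> dc_maxaff f M -> dc_maxaff f N.
Proof.
move=> MN [s [u [lo [hi [s0 u0 fE sl HM]]]]].
by exists s, u, lo, hi; split => //; apply: le_trans MN.
Qed.

Lemma dc_maxaff_eq f g M : f =1 g -> dc_maxaff f M -> dc_maxaff g M.
Proof.
move=> fg [s [u [lo [hi [s0 u0 fE sl HM]]]]].
by exists s, u, lo, hi; split => // t; rewrite -fg.
Qed.

Lemma dc_maxaff_affine a c : dc_maxaff (fun t => a * t + c) `|a|.
Proof.
exists [:: (a, c)], [:: (0, 0)], (Num.min a 0), (Num.max a 0); split => //.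
- by move=> t; rewrite /maxaff /= !big_cons !big_nil !maxxx /aff /=; ring.
- by move=> p; rewrite !inE => /orP[] /eqP-> /=; rewrite ge_min le_max lexx ?orbT.
- by case: (leP a 0) => a0; [rewrite ler0_norm | rewrite gtr0_norm]; lra.
Qed.

Lemma dc_maxaff_relu f M : dc_maxaff f M -> dc_maxaff (fun t => Num.max (f t) 0) M.
Proof.
move=> [s [u [lo [hi [s0 u0 fE sl HM]]]]].
exists (s ++ u), u, lo, hi; split => //.
- by case: (s) s0.
- by move=> t; rewrite fE maxaff_cat // addr_maxl subrr.
- by move=> p; rewrite !mem_cat -orbA orbb -mem_cat; apply: sl.
Qed.

Lemma dc_maxaff_opp f M : dc_maxaff f M -> dc_maxaff (fun t => - f t) M.
Proof.
move=> [s [u [lo [hi [s0 u0 fE sl HM]]]]].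
exists u, s, lo, hi; split => //.
- by move=> t; rewrite fE opprB.
- by move=> p; rewrite mem_cat orbC -mem_cat; apply: sl.
Qed.

Lemma dc_maxaff_pscale c f M : 0 <= c -> dc_maxaff f M -> dc_maxaff (fun t => c * f t) (c * M).
Proof.
move=> c0 [s [u [lo [hi [s0 u0 fE sl HM]]]]].
exists [seq c *: p | p <- s], [seq c *: p | p <- u], (c * lo), (c * hi); split.
- by case: (s) s0.
- by case: (u) u0.
- by move=> t; rewrite fE !maxaff_scale // mulrBr.
- move=> q; rewrite -map_cat => /mapP[p /sl /andP[lop phi] ->] /=.
  by rewrite !ler_wpM2l.
- by rewrite -mulrBr ler_wpM2l.
Qed.

Lemma dc_maxaff_scale c f M : dc_maxaff f M -> dc_maxaff (fun t => c * f t) (`|c| * M).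
Proof.
case: (leP 0 c) => c0 fM; first by rewrite ger0_norm //; apply: dc_maxaff_pscale.
rewrite ltr0_norm //; apply: dc_maxaff_eq (dc_maxaff_opp (dc_maxaff_pscale _ fM)); last by lra.
by move=> t; rewrite mulNr opprK.
Qed.

Lemma dc_maxaff_add f g M N : dc_maxaff f M -> dc_maxaff g N ->
  dc_maxaff (fun t => f t + g t) (M + N).
Proof.
move=> [s [u [lo [hi [s0 u0 fE sl HM]]]]] [s' [u' [lo' [hi' [s0' u0' gE sl' HN]]]]].
exists [seq p + q | p <- s, q <- s'], [seq p + q | p <- u, q <- u'], (lo + lo'), (hi + hi').
split; last by lra.
- by case: (s) (s') s0 s0' => [|? ?] [|? ?].
- by case: (u) (u') u0 u0' => [|? ?] [|? ?].
- by move=> t; rewrite fE gE !maxaff_allpairsD //; ring.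
- have slope_add p q : p \in s ++ u -> q \in s' ++ u' -> lo + lo' <= (p + q).1 <= hi + hi'.
    by move=> /sl /andP[? ?] /sl' /andP[? ?]; apply/andP; split; rewrite /=; lra.
  move=> r; rewrite mem_cat => /orP[] /allpairsP[[p q] [pr qr ->]];
    by apply: slope_add; rewrite mem_cat ?pr ?qr ?orbT.
Qed.

Lemma dc_maxaff_sum (I : Type) (r : seq I) (F : I -> R -> R) (M : I -> R) :
  (forall i, dc_maxaff (F i) (M i)) ->
  dc_maxaff (fun t => \sum_(i <- r) F i t) (\sum_(i <- r) M i).
Proof.
move=> FM; elim: r => [|i r IH].
  rewrite big_nil; apply: dc_maxaff_eq (dc_maxaff_le _ (dc_maxaff_affine 0 0)).
    by move=> t; rewrite big_nil mul0r addr0.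
  by rewrite normr0.
rewrite big_cons; apply: dc_maxaff_eq (dc_maxaff_add (FM i) IH) => t.
by rewrite big_cons.
Qed.

End MaxAffine.

Section Network.
Variable R : realType.

Lemma mx_norm_inf_ge0 m n (A : 'M[R]_(m, n)) : 0 <= mx_norm_inf A.
Proof. exact: bigmax_ge_id. Qed.

Lemma row_norm_le_mx_norm_inf m n (A : 'M[R]_(m, n)) i : \sum_j `|A i j| <= mx_norm_inf A.
Proof. exact: (le_bigmax 0 (fun i => \sum_j `|A i j|)). Qed.

Lemma net_pre_dc_maxaff (w : nat -> nat) (W : forall i : nat, 'M[R]_(w i.+1, w i))
    (b : forall i : nat, 'cV[R]_(w i.+1)) (W0 : 'M[R]_(w 0%N, 1)) (b0 : 'cV[R]_(w 0%N))
    k (j : 'I_(w k)) :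
  dc_maxaff (fun t => net_pre W b k (t *: W0 + b0) j 0)
    (mx_norm_inf W0 * \prod_(i < k) mx_norm_inf (W i)).
Proof.
elim: k j => [|k IH] j /=.
  rewrite big_ord0 mulr1.
  apply: dc_maxaff_le (dc_maxaff_eq _ (dc_maxaff_affine (W0 j 0) (b0 j 0))).
    by apply: le_trans (row_norm_le_mx_norm_inf W0 j); rewrite big_ord1.
  by move=> t; rewrite !mxE mulrC.
set C := mx_norm_inf W0 * \prod_(i < k) mx_norm_inf (W i).
have C0 : 0 <= C.
  by rewrite mulr_ge0 ?mx_norm_inf_ge0 // prodr_ge0 // => i _; apply: mx_norm_inf_ge0.
set x := fun t => (if k == 0%N then id else @relu R _ _) (net_pre W b k (t *: W0 + b0)).
have x_dc l : dc_maxaff (fun t => x t l 0) C.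
  rewrite /x; case: (k == 0%N); first exact: IH.
  by apply: dc_maxaff_eq (dc_maxaff_relu (IH l)) => t; rewrite mxE.
apply: dc_maxaff_le (dc_maxaff_eq _ (dc_maxaff_add
  (dc_maxaff_sum (index_enum _) (fun l => dc_maxaff_scale (W k j l) (x_dc l)))
  (dc_maxaff_affine 0 (b k j 0)))).
  rewrite normr0 addr0 -mulr_suml big_ord_recr /= mulrA mulrC.
  by rewrite ler_wpM2l // row_norm_le_mx_norm_inf.
by move=> t; rewrite !mxE mul0r add0r.
Qed.

End Network.

Lemma filter_all_in (T : Type) (F : set_system T) (I : choiceType) (s : seq I)
    (P : I -> T -> Prop) : Filter F ->
  (forall i, i \in s -> \forall x \near F, P i x) -> \forall x \near F, forall i, i \in s -> P i x.
Proof.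
move=> FF sP; apply: filterS (@filter_bigI T I [fset i | i in s]%fset P F FF _) => [x Px i si|i].
  by apply: Px; rewrite /= inE.
by rewrite inE; apply: sP.
Qed.

Section RealFunctions.
Variable R : realType.
Implicit Types (f : R -> R) (A B : R).

Lemma derive1_right_linear f t c : derivable f t 1 ->
  (\forall e \near 0^'+, f (e + t) = f t + e * c) -> f^`() t = c.
Proof.
move=> df fE; rewrite derive1E /derive cvg_at_rightE //.
apply: cvg_lim => //; apply: cvg_near_cst.
near=> e; have e0 : 0 < e by near: e; apply: nbhs_right_gt.
rewrite /= [e *: 1]mulr1 (near fE e) // addrAC subrr add0r.
by rewrite [_ *: _]mulrA mulVf ?mul1r // gt_eqF.
Unshelve. all: by end_near.
Qed.

Lemma derive1_near_affine f A B x : (\forall y \near x, f y = A * y + B) -> f^`() x = A.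
Proof.
move=> fE; rewrite derive1E (near_eq_derive _ fE).
have -> : (fun y => A * y + B) = (fun y => A *: y + B) by [].
by rewrite derive_val scaler1 addr0.
Qed.

Lemma cvg_derive1_near_affine (F : set_system R) {FF : Filter F} f A B :
  (\forall x \near F, \forall y \near x, f y = A * y + B) -> f^`() x @[x --> F] --> A.
Proof. by move=> fE; apply: cvg_near_cst; apply: filterS fE => x; apply: derive1_near_affine. Qed.

Lemma near_pinfty_nbhs (P : R -> Prop) :
  (\forall x \near +oo, P x) -> \forall x \near +oo, \forall y \near x, P y.
Proof. by move=> [M [Mr MP]]; exists M; split => // x Mx; apply: filterS (lt_nbhsr Mx). Qed.

Lemma near_ninfty_nbhs (P : R -> Prop) :
  (\forall x \near -oo, P x) -> \forall x \near -oo, \forall y \near x, P y.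
Proof. by move=> [M [Mr MP]]; exists M; split => // x xM; apply: filterS (lt_nbhsl xM). Qed.

Lemma var_sum_sub_homo (g u v : R -> R) x s : path <%R x s ->
  {in x :: s, forall t, g t = u t - v t} ->
  {homo u : a b / a < b >-> a <= b} -> {homo v : a b / a < b >-> a <= b} ->
  var_sum g (x :: s) <= (u (last x s) - u x) + (v (last x s) - v x).
Proof.
move=> + + uh vh; elim: s x => [|y s IH] x; first by rewrite /= !subrr addr0.
move=> /andP[xy ys] guv.
have -> : var_sum g [:: x, y & s] = `|g y - g x| + var_sum g (y :: s) by [].
have guv' : {in y :: s, forall t, g t = u t - v t}.
  by move=> t ts; apply: guv; rewrite inE ts orbT.
have := IH y ys guv'.
have gx : g x = u x - v x by apply: guv; rewrite mem_head.
have gy : g y = u y - v y by apply: guv'; rewrite mem_head.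
rewrite gx gy /=.
have := uh _ _ xy; have := vh _ _ xy => vxy uxy.
have : `|u y - v y - (u x - v x)| <= (u y - u x) + (v y - v x) by apply/ler_normlP; split; lra.
lra.
Qed.

End RealFunctions.

Section MaxAffineAnalysis.
Variable R : realType.
Implicit Types (p q : R * R) (s : seq (R * R)) (t : R).

(* The largest slope among the pieces active at t: the right derivative of maxaff s at t. *)
Definition maxaff_rslope s t := seqmax (fun p => p.1) [seq p <- s | aff p t == maxaff s t].

Lemma maxaff_rslope_mem s t : s != [::] -> exists p,
  [/\ p \in s, aff p t = maxaff s t, maxaff_rslope s t = p.1 &
      forall q, q \in s -> aff q t = maxaff s t -> q.1 <= p.1].
Proof.
move=> s0; have [p ps pt] := seqmax_mem (fun q => aff q t) s0.
have active0 : [seq q <- s | aff q t == maxaff s t] != [::].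
  by apply/eqP => /(congr1 (fun r => p \in r)); rewrite mem_filter ps /maxaff pt eqxx.
have [q] := seqmax_mem (fun q => q.1) active0; rewrite mem_filter => /andP[/eqP qt qs] rq.
exists q; split => // r rs rt; rewrite -[q.1]rq.
by apply: (seqmax_ge (fun q => q.1)); rewrite mem_filter rs rt eqxx.
Qed.

Lemma near_maxaff_right s t : s != [::] ->
  \forall e \near 0^'+, maxaff s (e + t) = maxaff s t + e * maxaff_rslope s t.
Proof.
move=> s0; have [p [ps pt -> pmax]] := maxaff_rslope_mem t s0.
suff : \forall e \near 0^'+, forall q, q \in s -> aff q (e + t) <= aff p (e + t).
  by apply: filterS => e ub; rewrite (maxaff_eq_aff ps ub) -pt /aff; ring.
apply: filter_all_in => q qs; have qt : aff q t <= aff p t by rewrite pt maxaff_ge.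
have [qp|pq] := leP q.1 p.1.
  near=> e; have e0 : 0 < e by near: e; apply: nbhs_right_gt.
  have : e * q.1 <= e * p.1 by rewrite ler_wpM2l // ltW.
  by move: qt; rewrite /aff; lra.
have {}qt : aff q t < aff p t.
  rewrite lt_neqAle qt andbT; apply: contraTneq pq => qpt.
  by rewrite -leNgt pmax // qpt pt.
have gap : 0 < (aff p t - aff q t) / (q.1 - p.1) by rewrite divr_gt0 // subr_gt0.
near=> e; have e0 : 0 < e by near: e; apply: nbhs_right_gt.
have : e < (aff p t - aff q t) / (q.1 - p.1) by near: e; apply: nbhs_right_lt.
rewrite ltr_pdivlMr ?subr_gt0 //; move: qt; rewrite /aff; lra.
Unshelve. all: by end_near.
Qed.

Lemma maxaff_rslope_homo s : s != [::] ->
  {homo maxaff_rslope s : t t' / t < t' >-> t <= t'}.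
Proof.
move=> s0 t t' tt'; have [p [ps pt -> _]] := maxaff_rslope_mem t s0.
have [p' [p's p't' -> _]] := maxaff_rslope_mem t' s0.
have : aff p t' <= aff p' t' by rewrite p't' maxaff_ge.
have : aff p' t <= aff p t by rewrite pt maxaff_ge.
rewrite /aff; nra.
Qed.

Lemma maxaff_rslope_within (s : seq (R * R)) t a b : s != [::] ->
  (forall q, q \in s -> a <= q.1 <= b) -> a <= maxaff_rslope s t <= b.
Proof. by move=> s0 sab; have [p [ps _ -> _]] := maxaff_rslope_mem t s0; apply: sab. Qed.

Lemma maxaff_pinfty s : s != [::] -> exists2 p, p \in s &
  (forall q, q \in s -> q.1 <= p.1) /\ \forall t \near +oo, maxaff s t = aff p t.
Proof.
move=> s0; have [p0 p0s p0max] := seqmax_mem (fun q => q.1) s0.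
set top := [seq q <- s | q.1 == p0.1].
have top0 : top != [::].
  by apply/eqP => /(congr1 (fun r => p0 \in r)); rewrite mem_filter p0s eqxx.
have [p] := seqmax_mem (fun q => q.2) top0; rewrite mem_filter => /andP[/eqP pp0 ps] pmax.
have slope_le q : q \in s -> q.1 <= p.1 by move=> qs; rewrite pp0 -p0max seqmax_ge.
exists p => //; split => //.
suff : \forall t \near +oo, forall q, q \in s -> aff q t <= aff p t.
  by apply: filterS => t; apply: maxaff_eq_aff.
apply: filter_all_in => q qs; have [qp|] := eqVneq q.1 p.1.
  apply: nearW => t; rewrite /aff qp lerD2l -pmax.
  by apply: (seqmax_ge (fun q => q.2)); rewrite mem_filter qp pp0 eqxx.
move=> qp; have {}qp : q.1 < p.1 by rewrite lt_neqAle qp slope_le.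
near=> t.
have : (q.2 - p.2) / (p.1 - q.1) < t by near: t; apply: nbhs_pinfty_gt; apply: num_real.
rewrite ltr_pdivrMr ?subr_gt0 // /aff; nra.
Unshelve. all: by end_near.
Qed.

Lemma maxaff_reflect s t : maxaff [seq (- p.1, p.2) | p <- s] t = maxaff s (- t).
Proof.
by rewrite /maxaff seqmax_map; congr seqmax; apply/funext => p; rewrite /aff /= mulNr mulrN.
Qed.

Lemma maxaff_ninfty s : s != [::] -> exists2 p, p \in s &
  (forall q, q \in s -> p.1 <= q.1) /\ \forall t \near -oo, maxaff s t = aff p t.
Proof.
move=> s0; have [|_ /mapP[p ps ->] [/= pmin near_p]] :=
  @maxaff_pinfty [seq (- p.1, p.2) | p <- s]; first by case: (s) s0.
exists p => //; split.
  by move=> q qs; rewrite -lerN2; apply: (pmin (- q.1, q.2)); apply/mapP; exists q.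
rewrite -ninfty; apply: filterS near_p => t /=.
by rewrite maxaff_reflect => ->; rewrite /aff /= mulNr mulrN.
Qed.

Lemma derive1_maxaff_sub (h : R -> R) P Q t : P != [::] -> Q != [::] ->
  h =1 (fun t => maxaff P t - maxaff Q t) -> derivable h t 1 ->
  h^`() t = maxaff_rslope P t - maxaff_rslope Q t.
Proof.
move=> P0 Q0 hE dht; apply: derive1_right_linear => //.
apply: filterS2 (near_maxaff_right t P0) (near_maxaff_right t Q0) => e eP eQ.
by rewrite !hE eP eQ; ring.
Qed.

End MaxAffineAnalysis.

Lemma dc_maxaff_derive1_variation (R : realType) (h : R -> R) (M : R) :
  dc_maxaff h M -> exists Lp Lm : R,
  [/\ h^`() x @[x --> +oo] --> Lp, h^`() x @[x --> -oo] --> Lm &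
    forall s, sorted <%R s -> all (fun t => `[< derivable h t 1 >]) s ->
      var_sum h^`() s + `|Lp| + `|Lm| <= 2 * M].
Proof.
move=> [P [Q [lo [hi [P0 Q0 hE sl HM]]]]].
have [pP pPs [pPmax pPnear]] := maxaff_pinfty P0.
have [pQ pQs [pQmax pQnear]] := maxaff_pinfty Q0.
have [mP mPs [mPmin mPnear]] := maxaff_ninfty P0.
have [mQ mQs [mQmin mQnear]] := maxaff_ninfty Q0.
exists (pP.1 - pQ.1), (mP.1 - mQ.1); split.
- apply: (cvg_derive1_near_affine (B := pP.2 - pQ.2)); apply: near_pinfty_nbhs.
  by apply: filterS2 pPnear pQnear => t eP eQ; rewrite hE eP eQ /aff; ring.
- apply: (cvg_derive1_near_affine (B := mP.2 - mQ.2)); apply: near_ninfty_nbhs.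
  by apply: filterS2 mPnear mQnear => t eP eQ; rewrite hE eP eQ /aff; ring.
have rsP t : mP.1 <= maxaff_rslope P t <= pP.1.
  by apply: maxaff_rslope_within => // q qs; rewrite mPmin ?pPmax.
have rsQ t : mQ.1 <= maxaff_rslope Q t <= pQ.1.
  by apply: maxaff_rslope_within => // q qs; rewrite mQmin ?pQmax.
move=> s ss dh.
have var_le : var_sum h^`() s <= (pP.1 - mP.1) + (pQ.1 - mQ.1).
  case: s ss dh => [|x s] ss dh.
    by have /andP[? ?] := rsP 0; have /andP[? ?] := rsQ 0; rewrite /=; lra.
  apply: le_trans (var_sum_sub_homo ss _ (maxaff_rslope_homo P0) (maxaff_rslope_homo Q0)) _.
    by move=> t ts; apply: derive1_maxaff_sub => //; move/allP: dh => /(_ t ts) /asboolP.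
  have /andP[? ?] := rsP x; have /andP[? ?] := rsQ x.
  have /andP[? ?] := rsP (last x s); have /andP[? ?] := rsQ (last x s); lra.
have slP p : p \in P -> lo <= p.1 <= hi by move=> ps; apply: sl; rewrite mem_cat ps.
have slQ p : p \in Q -> lo <= p.1 <= hi by move=> ps; apply: sl; rewrite mem_cat ps orbT.
have /andP[? ?] := slP pP pPs; have /andP[? ?] := slQ pQ pQs.
have /andP[? ?] := slP mP mPs; have /andP[? ?] := slQ mQ mQs.
have : `|pP.1 - pQ.1| <= 2 * hi - pP.1 - pQ.1 by apply/ler_normlP; split; lra.
have : `|mP.1 - mQ.1| <= mP.1 + mQ.1 - 2 * lo by apply/ler_normlP; split; lra.
lra.
Qed.

Theorem theorem1 (R : realType) (k : R) (n : nat) (w : nat -> nat)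
  (W : forall i : nat, 'M[R]_(w i.+1, w i)) (b : forall i : nat, 'cV[R]_(w i.+1))
  (W0 : 'M[R]_(w 0%N, 1)) (b0 : 'cV[R]_(w 0%N)) :
  0 < k -> (2 <= n)%N -> w n = 1%N ->
  \prod_(i < n) mx_norm_inf (W i) <= k ->
  mx_norm_inf W0 = 1 ->
  let h : R -> R := fun t => net W b n (t *: W0 + b0) in
  exists Lp Lm : R,
    (h^`() x @[x --> +oo] --> Lp) /\ (h^`() x @[x --> -oo] --> Lm) /\
    forall s : seq R, sorted <%R s -> all (fun t => `[< derivable h t 1 >]) s ->
      var_sum h^`() s + `|Lp| + `|Lm| <= 2 * k.
Proof.
move=> _ _ wn Wk W01 h.
have h_dc : dc_maxaff h k.
  apply: dc_maxaff_le (dc_maxaff_sum (index_enum _) (net_pre_dc_maxaff W b W0 b0 (k := n))).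
  by rewrite sumr_const card_ord wn W01 mul1r.
by have [Lp [Lm [? ? ?]]] := dc_maxaff_derive1_variation h_dc; exists Lp, Lm.
Qed.
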